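(* Let $G$ and $H$ be upward bipolar plane graphs with the same number $n$ of edges, let $\phi\colon\{1,\dots,n\}\to E(G)$ and $\psi\colon\{1,\dots,n\}\to E(H)$ be bijections, let $\mathbf A=(A;+)$ be an Abelian group and $b\in A$. Let $P=\mathrm{Problem}(G,H,\phi,\psi,\mathbf A,b)$ and let $P^\ast=\mathrm{Problem}(H^\ast,G^\ast,\psi^\ast,\phi^\ast,\mathbf A,b)$ be its dual problem. Then an $n$-tuple $\vec a\in A^n$ is a solution of $P$ if and only if it is a solution of $P^\ast$.
   Context: All graphs are finite directed graphs (parallel edges allowed); each edge $e$ goes from its tail $t(e)$ to its head $h(e)$. A graph is acyclic if it has no directed cycle. A source (sink) is a vertex with no incoming (outgoing) edges. A bipolar graph is an acyclic digraph with at least two vertices, exactly one source $s_G$ and exactly one sink $t_G$; every maximal directed path in it goes from $s_G$ to $t_G$. Paired-bipolar-graphs problem: $G,H$ bipolar graphs with $n$ edges each, bijections $\phi\colon\{1,\dots,n\}\to E(G)$, $\psi\colon\{1,\dots,n\}\to E(H)$; write $e_i=\phi(i)$, $e'_i=\psi(i)$; $\mathbf A=(A;+)$ an Abelian group, $b\in A$. This data is denoted $\mathrm{Problem}(G,H,\phi,\psi,\mathbf A,b)$. For $\vec a=(a_1,\dots,a_n)\in A^n$ and $X\subseteq\{1,\dots,n\}$ define $\mathrm{Eff}_{\vec a}(X)\colon V(G)\to A$ by $\mathrm{Eff}_{\vec a}(X)(v)=\sum_{i\in X,\,h(e_i)=v}a_i-\sum_{i\in X,\,t(e_i)=v}a_i$.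 Define $\mathrm{Tr}_b\colon V(G)\to A$ by $\mathrm{Tr}_b(s_G)=-b$, $\mathrm{Tr}_b(t_G)=b$, and $\mathrm{Tr}_b(v)=0$ otherwise. The tuple $\vec a$ is a solution of the problem if for every maximal directed path of $H$, with edge set $\{e'_j:j\in X\}$, we have $\mathrm{Eff}_{\vec a}(X)=\mathrm{Tr}_b$. A plane graph has vertices that are points of $\mathbb R^2$ and edges that are oriented Jordan arcs between their endpoints, with arcs meeting only at common endpoints. An upward bipolar plane graph is a bipolar plane graph $G$ such that $s_G$ and $t_G$ both lie on the boundary of the unbounded region (the outer face). Facets of such $G$: the bounded regions (inner facets) together with the two parts into which the unbounded region is cut by a curve inside it joining $s_G$ to $t_G$ through the point at infinity (the two outer facets). The dual $G^\ast$ has the facets of $G$ as vertices and, for each edge $e\in E(G)$, a dual edge $e^\ast$ going from the facet lying to the left of $e$ (when walking along $e$ from $t(e)$ to $h(e)$) to the facet lying to its right; $G^\ast$ is a bipolar graph whose source and sink are the two outer facets. The dual problem of $P=\mathrm{Problem}(G,H,\phi,\psi,\mathbf A,b)$ is $P^\ast=\mathrm{Problem}(H^\ast,G^\ast,\psi^\ast,\phi^\ast,\mathbf A,b)$, where $\psi^\ast(i)=(e'_i)^\ast$ and $\phi^\ast(i)=(e_i)^\ast$ (so the roles of the two graphs are interchanged and both are dualized). *)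

(* Combinatorial model of upward bipolar plane graphs
   (rotation systems of genus 0 with a designated outer face). *)
From mathcomp Require Import all_boot all_algebra perm.
Set Implicit Arguments. Unset Strict Implicit. Unset Printing Implicit Defensive.
Import GRing.Theory.
Local Open Scope ring_scope.

Record digraph := DiGraph {
  gV : finType; gE : finType; gtl : gE -> gV; ghd : gE -> gV }.

Section Paths.
Variable G : digraph.

Fixpoint walk_from (v : gV G) (p : seq (gE G)) : bool :=
  if p is e :: p' then (gtl e == v) && walk_from (ghd e) p' else true.

Definition walk_verts (v : gV G) (p : seq (gE G)) := v :: map (@ghd G) p.
Definition walk_end (v : gV G) (p : seq (gE G)) := last v (map (@ghd G) p).

Definition dpath (v : gV G) (p : seq (gE G)) :=
  walk_from v p && uniq (walk_verts v p).

Definition maxpath (v : gV G) (p : seq (gE G)) :=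
  [&& dpath v p,
      ~~ [exists e, (ghd e == v) && (gtl e \notin walk_verts v p)] &
      ~~ [exists e, (gtl e == walk_end v p) && (ghd e \notin walk_verts v p)]].

Definition acyclic := forall v p, walk_from v p -> walk_end v p = v -> p = [::].

Definition bipolar (s t : gV G) :=
  [/\ acyclic, (2 <= #|gV G|)%N,
      (forall v, (~~ [exists e, ghd e == v]) = (v == s)) &
      (forall v, (~~ [exists e, gtl e == v]) = (v == t))].
End Paths.

Section Problem.
Variables (A : zmodType) (G H : digraph) (sG tG : gV G) (n : nat).
Variables (phi : 'I_n -> gE G) (psi : 'I_n -> gE H) (b : A).

Definition Eff (a : 'I_n -> A) (X : pred 'I_n) (v : gV G) : A :=
  \sum_(i < n | X i && (ghd (phi i) == v)) a i
  - \sum_(i < n | X i && (gtl (phi i) == v)) a i.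

Definition Tr (v : gV G) : A := if v == sG then - b else if v == tG then b else 0.

Definition solution (a : 'I_n -> A) :=
  forall v p, maxpath v p -> forall w, Eff a (fun i => psi i \in p) w = Tr w.
End Problem.

Section Plane.
Variables (G : digraph) (sigma : {perm (gE G * bool)}) (dout : gE G * bool).
Variables (s t : gV G).

(* darts: (e,true) is the half-edge of e at its tail, (e,false) at its head *)
Definition dvert (d : gE G * bool) : gV G := if d.2 then gtl d.1 else ghd d.1.

(* face permutation: traverse the dart, then rotate (counterclockwise) at the
   reached vertex; the orbit of (e,true) is the face to the right of e,
   the orbit of (e,false) the face to the left of e *)
Definition fphi (d : gE G * bool) : gE G * bool := sigma (d.1, ~~ d.2).

Definition rotation_system :=
  (forall d, dvert (sigma d) = dvert d) /\
  (forall d d', dvert d = dvert d' -> fconnect sigma d d').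

(* genus 0 (the graph is connected, being bipolar): V - E + F = 2 *)
Definition genus0 := (#|gV G| + #|froots fphi| = #|gE G| + 2)%N.

Definition outer (d : gE G * bool) := fconnect fphi dout d.

Definition upward_plane :=
  [/\ rotation_system, genus0,
      (exists d, outer d /\ dvert d = s) & (exists d, outer d /\ dvert d = t)].

Definition dart_s := odflt dout [pick d | outer d && (dvert d == s)].
Definition dart_t := odflt dout [pick d | outer d && (dvert d == t)].

(* facet containing a dart: inner faces are named by their root dart; the
   outer face is cut (by the curve through infinity from s to t) into the part
   along the boundary walk from s to t (inr true, right outer facet) and the
   part from t back to s (inr false, left outer facet). *)
Definition raw_facet (d : gE G * bool) : (gE G * bool) + bool :=
  if outer d then inr (findex fphi dart_s d < findex fphi dart_s dart_t)%N
  else inl (froot fphi d).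

Definition is_facet : pred ((gE G * bool) + bool) :=
  fun f => [exists d, raw_facet d == f].

Definition facet := {f : (gE G * bool) + bool | is_facet f}.

Definition facet_of (d : gE G * bool) : facet :=
  exist _ (raw_facet d) (introT (@existsP _ (fun d' => raw_facet d' == raw_facet d))
                           (ex_intro _ d (eqxx _))).

Definition dual : digraph :=
  @DiGraph facet (gE G) (fun e => facet_of (e, false)) (fun e => facet_of (e, true)).

Definition dual_source : gV dual := facet_of dart_t.
Definition dual_sink : gV dual := facet_of dart_s.
End Plane.

From mathcomp Require Import all_boot all_algebra perm.
From mathcomp Require Import zify.
Set Implicit Arguments. Unset Strict Implicit. Unset Printing Implicit Defensive.
Import GRing.Theory.

(* Both problems are equivalent to one symmetric condition: for every maximal path X
   of H and every maximal path Y of G^*, the a_i with e'_i in X and e_i in Y sum to b.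
   Indeed, for an upward bipolar plane graph K and x : E(K) -> A,
   - x has net inflow Tr_b in K iff it sums to b along every maximal path of K^*, and
   - x has net inflow Tr_b in K^* iff it sums to b along every maximal path of K.
   Summing to b along all maximal paths characterises the coboundaries of potentials pi
   with pi(t) - pi(s) = b, and a coboundary in one of K, K^* has net inflow Tr_b in the
   other because the darts around a vertex, resp. along a facet, telescope.  The
   converse implications rest on every maximal path of K crossing every maximal path of
   K^* exactly once: the indicator of an s-t path is a flow, hence a coboundary of K^*
   over Q, by a dimension count that uses Euler's formula. *)

Section Walks.
Variable D : digraph.
Implicit Types (u v w : gV D) (e : gE D) (p q : seq (gE D)).

Lemma walk_from_cat v p q :
  walk_from v (p ++ q) = walk_from v p && walk_from (walk_end v p) q.
Proof. by elim: p v => [|e p IH] v //=; rewrite IH andbA. Qed.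

Lemma walk_end_cat v p q : walk_end v (p ++ q) = walk_end (walk_end v p) q.
Proof. by rewrite /walk_end map_cat last_cat. Qed.

Lemma walk_end_cons v e p : walk_end v (e :: p) = walk_end (ghd e) p.
Proof. by []. Qed.

Lemma walk_from_rcons v p e :
  walk_from v (rcons p e) = walk_from v p && (gtl e == walk_end v p).
Proof. by rewrite -cats1 walk_from_cat /= andbT. Qed.

Lemma walk_end_rcons v p e : walk_end v (rcons p e) = ghd e.
Proof. by rewrite /walk_end map_rcons last_rcons. Qed.

Definition edge_rel : rel (gV D) := fun u v => [exists e, (gtl e == u) && (ghd e == v)].

Lemma connect_walk u v : connect edge_rel u v -> exists2 p, walk_from u p & walk_end u p = v.
Proof.
case/connectP=> q; elim: q u => [|w q IH] u /=; first by move=> _ ->; exists [::].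
case/andP=> /existsP[e /andP[/eqP tl_e /eqP hd_e]] /IH{}IH /IH[p wp <-].
exists (e :: p); last by rewrite walk_end_cons hd_e.
by rewrite /= tl_e eqxx hd_e.
Qed.

Definition height v := #|[set u | connect edge_rel u v]|.

Section Acyclic.
Hypothesis acyclicD : acyclic D.

Lemma height_lt e : (height (gtl e) < height (ghd e))%N.
Proof.
apply/proper_card/properP; split.
  apply/subsetP=> u; rewrite !inE => /connect_trans; apply.
  by apply: connect1; apply/existsP; exists e; rewrite !eqxx.
exists (ghd e); first by rewrite inE connect0.
rewrite inE; apply/negP=> /connect_walk[p wp ep].
by have := acyclicD (v := gtl e) (p := e :: p); rewrite /= eqxx wp => /(_ isT ep).
Qed.

Lemma height_walk_verts v p u : walk_from v p -> u \in walk_verts v p ->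
  (height v <= height u <= height (walk_end v p))%N.
Proof.
elim: p v u => [|e p IH] v u /=; first by rewrite /walk_verts inE => _ /eqP ->; rewrite leqnn.
case/andP=> /eqP tl_e wp; rewrite /walk_verts /= inE => /orP[/eqP ->|u_p].
  rewrite leqnn /=; have := IH _ (ghd e) wp; rewrite /walk_verts inE eqxx => /(_ isT).
  by case/andP=> _; apply: leq_trans; rewrite -tl_e ltnW ?height_lt.
have /andP[le_u ->] := IH _ u wp u_p; rewrite andbT.
by apply: leq_trans le_u; rewrite -tl_e ltnW ?height_lt.
Qed.

Lemma walk_uniq v p : walk_from v p -> uniq (walk_verts v p).
Proof.
move=> wp; apply: (sorted_uniq (leT := fun x y => height x < height y)%N).
- by move=> x y z; apply: ltn_trans.
- by move=> x; rewrite /= ltnn.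
elim: p v wp => [|e p IH] v //= /andP[/eqP tl_e wp].
by rewrite -tl_e height_lt; apply: IH.
Qed.

Lemma walk_uniq_edges v p : walk_from v p -> uniq p.
Proof. by move/walk_uniq; rewrite /walk_verts /= => /andP[_ /map_uniq]. Qed.

Lemma exists_source v0 : exists v, ~~ [exists e, ghd e == v].
Proof.
have [v _ v_min] := arg_minnP height (isT : predT v0).
exists v; apply/existsP=> -[e /eqP hd_e].
by have := v_min (gtl e) isT; rewrite -hd_e leqNgt height_lt.
Qed.

Lemma exists_sink v0 : exists v, ~~ [exists e, gtl e == v].
Proof.
have [v _ v_max] := arg_maxnP height (isT : predT v0).
exists v; apply/existsP=> -[e /eqP tl_e].
by have := v_max (ghd e) isT; rewrite -tl_e => /(leq_trans (height_lt e)); rewrite ltnn.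
Qed.
End Acyclic.
End Walks.

Section Bipolar.
Variables (D : digraph) (s t : gV D).
Hypothesis bipD : bipolar s t.
Implicit Types (v w : gV D) (e : gE D) (p q : seq (gE D)).

Lemma bipolar_acyclic : acyclic D. Proof. by case: bipD. Qed.

Lemma bipolar_card : (2 <= #|gV D|)%N. Proof. by case: bipD. Qed.

Lemma bipolar_sourceE v : (~~ [exists e, ghd e == v]) = (v == s). Proof. by case: bipD. Qed.

Lemma bipolar_sinkE v : (~~ [exists e, gtl e == v]) = (v == t). Proof. by case: bipD. Qed.

Lemma in_edge v : v != s -> exists e, ghd e = v.
Proof. by rewrite -bipolar_sourceE negbK => /existsP[e /eqP]; exists e. Qed.

Lemma out_edge v : v != t -> exists e, gtl e = v.
Proof. by rewrite -bipolar_sinkE negbK => /existsP[e /eqP]; exists e. Qed.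

Lemma head_neq_source e : ghd e != s.
Proof. by rewrite -bipolar_sourceE negbK; apply/existsP; exists e. Qed.

Lemma tail_neq_sink e : gtl e != t.
Proof. by rewrite -bipolar_sinkE negbK; apply/existsP; exists e. Qed.

Lemma walk_from_source v : exists2 p, walk_from s p & walk_end s p = v.
Proof.
elim: {v}(height v).+1 {-2}v (ltnSn (height v)) => [|m IH] v //; rewrite ltnS => le_v.
have [-> | v_neq_s] := eqVneq v s; first by exists [::].
have [e hd_e] := in_edge v_neq_s.
have lt_e := height_lt bipolar_acyclic e; rewrite hd_e in lt_e.
have [p wp ep] := IH (gtl e) (leq_trans lt_e le_v).
by exists (rcons p e); rewrite ?walk_from_rcons ?walk_end_rcons ?wp ?ep ?eqxx.
Qed.

Lemma walk_to_sink v : exists2 p, walk_from v p & walk_end v p = t.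
Proof.
elim: {v}(#|gV D| - height v).+1 {-2}v (ltnSn (#|gV D| - height v)) => [|m IH] v //.
rewrite ltnS => le_v; have [-> | v_neq_t] := eqVneq v t; first by exists [::].
have [e tl_e] := out_edge v_neq_t.
have lt_e := height_lt bipolar_acyclic e; rewrite tl_e in lt_e.
have le_card : (height (ghd e) <= #|gV D|)%N by apply: max_card.
have [p wp ep] := IH (ghd e) (leq_trans (ltn_sub2l (leq_trans lt_e le_card) lt_e) le_v).
by exists (e :: p); rewrite /= ?tl_e ?eqxx.
Qed.

Lemma source_neq_sink : s != t.
Proof.
apply/eqP=> s_eq_t; have [v v_neq_s] : exists v, v != s.
  apply/existsP; rewrite -negb_forall; apply/negP=> /forallP all_s.
  have := bipolar_card; rewrite leqNgt ltnS -(card1 s) subset_leq_card //.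
  by apply/subsetP=> v _; rewrite inE all_s.
have [[|e p] /= wp ep] := walk_from_source v; first by rewrite -ep eqxx in v_neq_s.
by move: wp (tail_neq_sink e) => /andP[/eqP -> _]; rewrite s_eq_t eqxx.
Qed.

Lemma maxpathE v p : maxpath v p = [&& v == s, walk_from v p & walk_end v p == t].
Proof.
have acyclicD := bipolar_acyclic.
apply/idP/idP.
  case/and3P=> /andP[wp _] no_in no_out; rewrite wp /=; apply/andP; split.
    apply/negPn/negP=> /in_edge[e hd_e].
    move/existsP: no_in; apply; exists e; rewrite hd_e eqxx /=.
    apply/negP=> /(height_walk_verts acyclicD wp) /andP[le_e _].
    by have := height_lt acyclicD e; rewrite hd_e ltnNge le_e.
  apply/negPn/negP=> /out_edge[e tl_e].
  move/existsP: no_out; apply; exists e; rewrite tl_e eqxx /=.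
  apply/negP=> /(height_walk_verts acyclicD wp) /andP[_ le_e].
  by have := height_lt acyclicD e; rewrite tl_e ltnNge le_e.
case/and3P=> /eqP -> wp /eqP ep; rewrite /maxpath /dpath wp (walk_uniq acyclicD wp) /=.
apply/andP; split; apply/existsP=> -[e /andP[/eqP h _]].
  by move: (head_neq_source e); rewrite h eqxx.
by move: (tail_neq_sink e); rewrite h ep eqxx.
Qed.

Lemma maxpath_source v p : maxpath v p -> v = s.
Proof. by rewrite maxpathE => /and3P[/eqP]. Qed.

Lemma maxpath_through e : exists2 p, maxpath s p & e \in p.
Proof.
have [p1 w1 e1] := walk_from_source (gtl e).
have [p2 w2 e2] := walk_to_sink (ghd e).
exists (p1 ++ e :: p2); last by rewrite mem_cat mem_head orbT.
by rewrite maxpathE eqxx walk_from_cat w1 e1 /= eqxx w2 walk_end_cat e1 walk_end_cons e2 /=.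
Qed.

Lemma edge_invariant_const (T : Type) (c : gV D -> T) :
  (forall e, c (ghd e) = c (gtl e)) -> forall v, c v = c s.
Proof.
move=> c_e v; have [p wp <-] := walk_from_source v.
elim: p s wp => [|e p IH] u //= /andP[/eqP tl_e wp].
by rewrite walk_end_cons IH // c_e tl_e.
Qed.
End Bipolar.

Local Open Scope ring_scope.

Definition net_inflow (D : digraph) (A : zmodType) (x : gE D -> A) (v : gV D) : A :=
  \sum_(e | ghd e == v) x e - \sum_(e | gtl e == v) x e.

Definition coboundary (D : digraph) (A : zmodType) (pi : gV D -> A) (e : gE D) : A :=
  pi (ghd e) - pi (gtl e).

Lemma sum_indicator_count (T : eqType) (R : pzSemiRingType) (X p : seq T) :
  \sum_(e <- p) ((e \in X)%:R : R) = (count (mem X) p)%:R.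
Proof. by elim: p => [|e p IH]; rewrite ?big_nil ?big_cons //= IH natrD. Qed.

Lemma sum_mem_indicatorC (T : finType) (R : pzSemiRingType) (p q : seq T) :
  \sum_(e in p) ((e \in q)%:R : R) = \sum_(e in q) ((e \in p)%:R : R).
Proof.
by rewrite big_mkcond [RHS]big_mkcond; apply: eq_bigr => e _; case: (e \in p); case: (e \in q).
Qed.

Section NetInflow.
Variable D : digraph.
Implicit Types (v w : gV D) (e : gE D) (p : seq (gE D)).

Lemma eq_net_inflow (A : zmodType) (x y : gE D -> A) : x =1 y -> net_inflow x =1 net_inflow y.
Proof. by move=> eq_xy v; rewrite /net_inflow; congr (_ - _); apply: eq_bigr. Qed.

Lemma net_inflowE (R : pzRingType) (x : gE D -> R) v :
  net_inflow x v = \sum_e x e * ((ghd e == v)%:R - (gtl e == v)%:R).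
Proof.
under eq_bigr do rewrite mulrBr.
rewrite sumrB /net_inflow; congr (_ - _); rewrite big_mkcond; apply: eq_bigr => e _;
  by case: eqP; rewrite ?mulr1 ?mulr0.
Qed.

Lemma walk_sum_coboundary (A : zmodType) (pi : gV D -> A) v p : walk_from v p ->
  \sum_(e <- p) coboundary pi e = pi (walk_end v p) - pi v.
Proof.
elim: p v => [|e p IH] v /=; first by rewrite big_nil subrr.
case/andP=> /eqP tl_e wp; rewrite big_cons (IH _ wp) walk_end_cons /coboundary tl_e.
by rewrite addrC addrA subrK.
Qed.

Lemma net_inflow_walk_indicator (R : pzRingType) v p w : walk_from v p -> uniq p ->
  net_inflow (fun e => (e \in p)%:R : R) w = (walk_end v p == w)%:R - (v == w)%:R.
Proof.
move=> wp up; rewrite -(walk_sum_coboundary (fun u => (u == w)%:R) wp) big_uniq //.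
rewrite /net_inflow sumrB; congr (_ - _); rewrite big_mkcond [RHS]big_mkcond;
  by apply: eq_bigr => e _; case: (e \in p); case: (_ == w).
Qed.

Lemma sum_mulrz_coboundary (A : zmodType) (x : gE D -> A) (c : gV D -> int) :
  \sum_e x e *~ coboundary c e = \sum_v net_inflow x v *~ c v.
Proof.
rewrite /net_inflow /coboundary; under eq_bigr do rewrite mulrzBr.
under [RHS]eq_bigr do rewrite mulrzBl !mulrz_suml.
rewrite !sumrB; congr (_ - _); rewrite (exchange_big_dep xpredT) //=.
  by apply: eq_bigr => e _; rewrite (big_pred1 (ghd e)) // => v; rewrite eq_sym.
by apply: eq_bigr => e _; rewrite (big_pred1 (gtl e)) // => v; rewrite eq_sym.
Qed.
End NetInflow.

Section Flows.
Variables (D : digraph) (s t : gV D).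
Hypothesis bipD : bipolar s t.
Implicit Types (v : gV D) (e : gE D) (p : seq (gE D)).

Lemma sum_Tr_mulrz (A : zmodType) (b : A) (c : gV D -> int) :
  \sum_v Tr s t b v *~ c v = b *~ (c t - c s).
Proof.
have s_neq_t := source_neq_sink bipD.
rewrite (bigD1 s) // (bigD1 t) 1?eq_sym //= big1 => [|v /andP[v_neq_s v_neq_t]].
  by rewrite /Tr eqxx eq_sym (negbTE s_neq_t) eqxx addr0 mulrzBr mulNrz addrC.
by rewrite /Tr (negbTE v_neq_s) (negbTE v_neq_t) mul0rz.
Qed.

Lemma path_sums_coboundary (A : zmodType) (z : gE D -> A) (b : A) :
  (forall v p, maxpath v p -> \sum_(e in p) z e = b) ->
  exists2 pi : gV D -> A, z =1 coboundary pi & pi t - pi s = b.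
Proof.
move=> sum_z; have acyclicD := bipolar_acyclic bipD.
have walk_sum p : walk_from s p -> walk_end s p = t -> \sum_(e <- p) z e = b.
  move=> wp ep; rewrite big_uniq ?(walk_uniq_edges acyclicD wp) //.
  by apply: (sum_z s); rewrite (maxpathE bipD) eqxx wp ep eqxx.
(* Two walks from s to the same vertex, completed by a common walk to t, become maximal
   paths; hence z has the same sum along both. *)
have walk_sum_eq p q : walk_from s p -> walk_from s q -> walk_end s p = walk_end s q ->
    \sum_(e <- p) z e = \sum_(e <- q) z e.
  move=> wp wq epq; have [r wr er] := walk_to_sink bipD (walk_end s p).
  have := walk_sum (p ++ r); have := walk_sum (q ++ r).
  rewrite !walk_from_cat !walk_end_cat wp wq -epq wr er !big_cat => <- //.
  by move/(_ isT erefl)/addIr.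
have walk_to v : exists p, walk_from s p && (walk_end s p == v).
  by have [p wp ep] := walk_from_source bipD v; exists p; rewrite wp ep eqxx.
pose pi v := \sum_(e <- xchoose (walk_to v)) z e.
have walk_sum_pi p : walk_from s p -> \sum_(e <- p) z e = pi (walk_end s p).
  by move=> wp; have /andP[wv /eqP ev] := xchooseP (walk_to (walk_end s p)); apply: walk_sum_eq.
exists pi => [e | ].
  have [p wp ep] := walk_from_source bipD (gtl e).
  have wpe : walk_from s (rcons p e) by rewrite walk_from_rcons wp ep eqxx.
  by rewrite /coboundary -(walk_end_rcons s p e) -walk_sum_pi // -ep -walk_sum_pi //
    -cats1 big_cat big_seq1 addrC addKr.
have [p wp ep] := walk_to_sink bipD s.
by rewrite -ep -walk_sum_pi // -[s]/(walk_end s [::]) -walk_sum_pi // big_nil subr0 walk_sum.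
Qed.

Lemma flow_sum_cut (A : zmodType) (x : gE D -> A) (b : A) (Y : seq (gE D)) :
  (forall p, maxpath s p -> \sum_(e in p) ((e \in Y)%:R : int) = 1) ->
  (forall v, net_inflow x v = Tr s t b v) -> \sum_(e in Y) x e = b.
Proof.
move=> cut_Y flow_x.
have [c Y_c c_st] : exists2 c : gV D -> int,
    (fun e => (e \in Y)%:R) =1 coboundary c & c t - c s = 1.
  apply: path_sums_coboundary => v p mp.
  by move: (mp); rewrite (maxpath_source bipD mp); apply: cut_Y.
transitivity (\sum_e x e *~ coboundary c e).
  by rewrite big_mkcond; apply: eq_bigr => e _; rewrite -Y_c; case: (e \in Y).
rewrite sum_mulrz_coboundary; under eq_bigr do rewrite flow_x.
by rewrite sum_Tr_mulrz c_st.
Qed.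
End Flows.

Lemma sum_mul_eq (T : finType) (R : pzRingType) (g : T -> R) a :
  \sum_x g x * (a == x)%:R = g a.
Proof.
rewrite (bigD1 a) //= eqxx mulr1 big1 ?addr0 // => x x_neq_a.
by rewrite eq_sym (negbTE x_neq_a) mulr0.
Qed.

Section Incidence.
Variable D : digraph.

Definition incidence : 'M[rat]_(#|gV D|, #|gE D|) :=
  \matrix_(i, j) ((ghd (enum_val j) == enum_val i)%:R - (gtl (enum_val j) == enum_val i)%:R).

Lemma row_mul_incidence (pi : gV D -> rat) j :
  ((\row_i pi (enum_val i)) *m incidence) 0 j = coboundary pi (enum_val j).
Proof.
rewrite mxE; under eq_bigr do rewrite !mxE.
rewrite -(big_enum_val (fun v => pi v * ((ghd (enum_val j) == v)%:R - (gtl (enum_val j) == v)%:R))).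
by under eq_bigr do rewrite mulrBr; rewrite sumrB !sum_mul_eq.
Qed.

Lemma row_mul_tr_incidence (x : gE D -> rat) k :
  ((\row_j x (enum_val j)) *m incidence^T) 0 k = net_inflow x (enum_val k).
Proof.
rewrite mxE net_inflowE; under eq_bigr do rewrite !mxE.
by rewrite -(big_enum_val (fun e => x e * ((ghd e == enum_val k)%:R - (gtl e == enum_val k)%:R))).
Qed.

Lemma rank_incidence :
  (forall c : gV D -> rat, (forall e, c (ghd e) = c (gtl e)) -> forall v w, c v = c w) ->
  (#|gV D| - 1 <= \rank incidence)%N.
Proof.
move=> edge_const; suff : (\rank (kermx incidence) <= 1)%N by rewrite mxrank_ker; lia.
suff ker_const : (kermx incidence <= (const_mx 1 : 'rV[rat]_#|gV D|))%MS.
  exact: leq_trans (mxrankS ker_const) (rank_leq_row _).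
apply/row_subP => i; set r := row i (kermx incidence).
have r0 : r *m incidence = 0 by rewrite /r -row_mul mulmx_ker row0.
pose c v := r 0 (enum_rank v).
have rE : r = \row_k c (enum_val k) by apply/rowP => k; rewrite [RHS]mxE /c enum_valK.
have c_edge e : c (ghd e) = c (gtl e).
  apply/eqP; rewrite -subr_eq0; have := row_mul_incidence c (enum_rank e).
  by rewrite -rE r0 mxE enum_rankK /coboundary => <-.
case: (pickP (fun _ : 'I_#|gV D| => true)) => [k0 _ | no_index]; last first.
  by rewrite (_ : r = 0) ?sub0mx //; apply/rowP => k; have := no_index k.
rewrite (_ : r = c (enum_val k0) *: const_mx 1) ?scalemx_sub //.
by rewrite rE; apply/rowP => k; rewrite !mxE mulr1 (edge_const c c_edge _ (enum_val k0)).
Qed.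
End Incidence.

Section InnerIncidence.
Variables (D : digraph) (s t : gV D).

Let inner : 'rV[rat]_#|gV D| := \row_k ((enum_val k != s) && (enum_val k != t))%:R.

Definition inner_incidence : 'M[rat]_(#|gE D|, #|gV D|) := (incidence D)^T *m diag_mx inner.

Lemma tr_inner_incidence : inner_incidence^T = diag_mx inner *m incidence D.
Proof. by rewrite trmx_mul tr_diag_mx trmxK. Qed.

Lemma row_mul_inner_incidence (x : gE D -> rat) k :
  ((\row_j x (enum_val j)) *m inner_incidence) 0 k =
  net_inflow x (enum_val k) * ((enum_val k != s) && (enum_val k != t))%:R.
Proof. by rewrite mulmxA mul_mx_diag mxE row_mul_tr_incidence mxE. Qed.

Hypothesis bipD : bipolar s t.

Lemma rank_inner_incidence : (#|gV D| - 2 <= \rank inner_incidence)%N.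
Proof.
pose delta v : 'rV[rat]_#|gV D| := delta_mx 0 (enum_rank v).
suff : (\rank (kermx inner_incidence^T) <= 2)%N by rewrite mxrank_ker mxrank_tr; lia.
suff ker_st : (kermx inner_incidence^T <= delta s + delta t)%MS.
  apply: leq_trans (mxrankS ker_st) _.
  by apply: leq_trans (mxrank_adds_leqif _ _) _; rewrite !mxrank_delta.
apply/row_subP => i; set r := row i (kermx inner_incidence^T).
have r0 : (r *m diag_mx inner) *m incidence D = 0.
  by rewrite -mulmxA -tr_inner_incidence /r -row_mul mulmx_ker row0.
clearbody r.
pose c v := r 0 (enum_rank v) * inner 0 (enum_rank v).
have c_edge e : c (ghd e) = c (gtl e).
  apply/eqP; rewrite -subr_eq0; have := row_mul_incidence c (enum_rank e).
  rewrite enum_rankK /coboundary => <-.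
  rewrite (_ : \row_k c (enum_val k) = r *m diag_mx inner) ?r0 ?mxE //.
  by apply/rowP => k; rewrite mul_mx_diag !mxE /c enum_valK /inner mxE.
have c0 v : (v != s) && (v != t) -> r 0 (enum_rank v) = 0.
  move=> v_inner; have := edge_invariant_const bipD c_edge v.
  by rewrite /c !mxE !enum_rankK v_inner eqxx mulr1 mulr0.
rewrite (_ : r = r 0 (enum_rank s) *: delta s + r 0 (enum_rank t) *: delta t).
  by apply: addmx_sub_adds; apply: scalemx_sub; apply: submx_refl.
apply/rowP => k; rewrite -(enum_valK k); move: (enum_val k) => v.
rewrite /delta !mxE !eqxx /= !(inj_eq enum_rank_inj).
have [-> | v_neq_s] := eqVneq v s.
  by rewrite (negbTE (source_neq_sink bipD)) mulr1 mulr0 addr0.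
have [-> | v_neq_t] := eqVneq v t; first by rewrite mulr1 mulr0 add0r.
by rewrite c0 ?v_neq_s ?v_neq_t // !mulr0 addr0.
Qed.
End InnerIncidence.

Lemma sum_pair_bool (T : finType) (A : zmodType) (P : pred (T * bool)) (F : T * bool -> A) :
  \sum_(d | P d) F d = \sum_(x | P (x, true)) F (x, true) + \sum_(x | P (x, false)) F (x, false).
Proof.
rewrite big_mkcond (eq_bigr (fun d => (fun x b => if P (x, b) then F (x, b) else 0) d.1 d.2));
  last by case.
rewrite -(pair_bigA _ (fun x b => if P (x, b) then F (x, b) else 0)) /=.
by rewrite !(big_mkcond (fun x => P (x, _))) -big_split /=; apply: eq_bigr => x _; rewrite big_bool.
Qed.

Section Plane.
Variables (K : digraph) (sg : {perm (gE K * bool)}) (dout : gE K * bool) (s t : gV K).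
Hypotheses (bipK : bipolar s t) (planeK : upward_plane sg dout s t).
Implicit Types (d : gE K * bool) (e : gE K).

Local Notation fp := (fphi sg).
Local Notation ds := (dart_s sg dout s).
Local Notation dt := (dart_t sg dout t).
Local Notation out := (outer sg dout).
Local Notation rf := (raw_facet sg dout s t).
Local Notation fo := (facet_of sg dout s t).
Local Notation KD := (dual sg dout s t).
Local Notation sD := (dual_source sg dout s t).
Local Notation tD := (dual_sink sg dout s t).
Local Notation idx := (findex fp ds).
Local Notation ord := (order fp ds).

Definition flip d := (d.1, ~~ d.2).

Lemma flipK : involutive flip. Proof. by case=> e b; rewrite /flip /= negbK. Qed.

Lemma fphiE d : fp d = sg (flip d). Proof. by []. Qed.

Lemma fphi_inj : injective fp.
Proof. by move=> d d'; rewrite !fphiE => /perm_inj /(can_inj flipK). Qed.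

Lemma fphi_connect_sym : connect_sym (frel fp).
Proof. exact: fconnect_sym fphi_inj. Qed.

Lemma dvert_sigma d : dvert (sg d) = dvert d.
Proof. by case: planeK => -[dvert_sg _] _ _ _; apply: dvert_sg. Qed.

Lemma dvert_fphi d : dvert (fp d) = dvert (flip d). Proof. by rewrite fphiE dvert_sigma. Qed.

Lemma sigma_connect d d' : dvert d = dvert d' -> fconnect sg d d'.
Proof. by case: planeK => -[_ sg_connect] _ _ _; apply: sg_connect. Qed.

Lemma dart_s_spec : out ds /\ dvert ds = s.
Proof.
rewrite /dart_s; case: pickP => [d /andP[out_d /eqP ->] | no_d] //=.
by case: planeK => _ _ [d [out_d vd]] _; move: (no_d d); rewrite out_d vd eqxx.
Qed.

Lemma dart_t_spec : out dt /\ dvert dt = t.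
Proof.
rewrite /dart_t; case: pickP => [d /andP[out_d /eqP ->] | no_d] //=.
by case: planeK => _ _ _ [d [out_d vd]]; move: (no_d d); rewrite out_d vd eqxx.
Qed.

Lemma outerE d : out d = fconnect fp ds d.
Proof.
have [out_ds _] := dart_s_spec; rewrite /outer in out_ds *.
apply/idP/idP => [out_d | ds_d]; last exact: connect_trans out_ds ds_d.
by apply: connect_trans out_d; rewrite fphi_connect_sym.
Qed.

Lemma dart_s_neq_dart_t : ds != dt.
Proof.
apply/eqP=> eq_st; have [_ vs] := dart_s_spec; have [_ vt] := dart_t_spec.
by move: (source_neq_sink bipK); rewrite -vs -vt eq_st eqxx.
Qed.

Lemma findex_outer_lt d : out d -> (idx d < ord)%N.
Proof. by rewrite outerE; apply: findex_max. Qed.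

Lemma iter_findex_outer d : out d -> iter (idx d) fp ds = d.
Proof. by rewrite outerE; apply: iter_findex. Qed.

Lemma outer_iter i : out (iter i fp ds).
Proof. by rewrite outerE fconnect_iter. Qed.

Lemma findex_outer_inj d d' : out d -> out d' -> idx d = idx d' -> d = d'.
Proof.
by move=> out_d out_d' eq_idx; rewrite -(iter_findex_outer out_d) eq_idx iter_findex_outer.
Qed.

Lemma findex_dart_t_gt0 : (0 < idx dt)%N.
Proof.
rewrite lt0n; apply/eqP=> idx0; have [out_dt _] := dart_t_spec.
by move: dart_s_neq_dart_t; rewrite -(iter_findex_outer out_dt) idx0 eqxx.
Qed.

Lemma findex_dart_t_lt : (idx dt < ord)%N.
Proof. by apply: findex_outer_lt; case: dart_t_spec. Qed.

Lemma outer_fphi d : out (fp d) = out d.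
Proof. by rewrite !outerE -(same_fconnect1_r fphi_inj). Qed.

Lemma findex_fphi d : out d -> fp d != ds -> idx (fp d) = (idx d).+1.
Proof.
move=> out_d fd_neq_ds; have lt_d := findex_outer_lt out_d.
have fd_iter : fp d = iter (idx d).+1 fp ds by rewrite iterS iter_findex_outer.
rewrite fd_iter findex_iter // ltn_neqAle lt_d andbT.
apply/eqP=> eq_ord; move: fd_neq_ds; rewrite fd_iter eq_ord iter_order ?eqxx //.
exact: fphi_inj.
Qed.

Lemma findex_fphi_dart_s d : fp d = ds -> out d /\ idx d = ord.-1.
Proof.
move=> fd_ds; have out_d : out d by rewrite -outer_fphi fd_ds; case: dart_s_spec.
split=> //; have lt_d := findex_outer_lt out_d.
have : iter (idx d).+1 fp ds = ds by rewrite iterS iter_findex_outer.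
case: (ltnP (idx d).+1 ord) => [lt_Sd | ge_Sd]; last by move=> _; lia.
by move=> iter_ds; have := findex_iter lt_Sd; rewrite iter_ds findex0.
Qed.

Lemma raw_facetE d : rf d = if out d then inr (idx d < idx dt)%N else inl (froot fp d).
Proof. by []. Qed.

Lemma raw_facet_eq_inr d b : (rf d == inr b) = out d && ((idx d < idx dt)%N == b).
Proof. by rewrite raw_facetE; case: (out d). Qed.

Lemma raw_facet_fphi d : fp d != ds -> fp d != dt -> rf (fp d) = rf d.
Proof.
move=> fd_neq_ds fd_neq_dt; rewrite !raw_facetE outer_fphi; case: ifP => out_d.
  rewrite findex_fphi //; congr inr; rewrite [RHS]leq_eqVlt.
  case: eqVneq => //= eq_idx; case/negP: fd_neq_dt; apply/eqP.
  apply: findex_outer_inj; rewrite ?outer_fphi ?findex_fphi //; by case: dart_t_spec.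
congr inl; symmetry; apply/(fingraph.rootP fphi_connect_sym); exact: fconnect1.
Qed.

Lemma raw_facet_dart_s : rf ds = inr true.
Proof. by rewrite raw_facetE; case: dart_s_spec => -> _; rewrite findex0 findex_dart_t_gt0. Qed.

Lemma raw_facet_dart_t : rf dt = inr false.
Proof. by rewrite raw_facetE; case: dart_t_spec => -> _; rewrite ltnn. Qed.

Lemma raw_facet_fphi_dart_s d : fp d = ds -> rf d = inr false.
Proof.
move=> fd_ds; have [out_d idx_d] := findex_fphi_dart_s fd_ds; rewrite raw_facetE out_d idx_d.
by congr inr; apply/negbTE; rewrite -leqNgt; have := findex_dart_t_lt; lia.
Qed.

Lemma raw_facet_fphi_dart_t d : fp d = dt -> rf d = inr true.
Proof.
move=> fd_dt; have out_d : out d by rewrite -outer_fphi fd_dt; case: dart_t_spec.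
rewrite raw_facetE out_d -fd_dt findex_fphi ?ltnSn // fd_dt eq_sym.
exact: dart_s_neq_dart_t.
Qed.

Lemma facet_of_eq d d' : rf d = rf d' -> fo d = fo d'.
Proof. by move=> eq_rf; apply: val_inj. Qed.

Lemma facet_of_surj (f : gV KD) : exists d, f = fo d.
Proof.
case: f => r is_facet_r; have /existsP[d /eqP rd] := is_facet_r.
by exists d; apply: val_inj; rewrite /= rd.
Qed.

Lemma facet_sigma_flip d : sg d != ds -> sg d != dt -> fo (sg d) = fo (flip d).
Proof.
move=> sd_neq_ds sd_neq_dt; apply: facet_of_eq.
have fphi_flip : fp (flip d) = sg d by rewrite fphiE flipK.
by rewrite -fphi_flip raw_facet_fphi ?fphi_flip.
Qed.

(* Around a vertex v the darts d and [flip (sg^-1 d)] bound the same facet, so the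
   sum telescopes, except at the corners of the outer face at s and t. *)
Lemma net_inflow_dual_coboundary (A : zmodType) (phi : gV KD -> A) v :
  net_inflow (D := K) (coboundary (D := KD) phi) v = Tr s t (phi tD - phi sD) v.
Proof.
pose h d := phi (fo d).
have -> : net_inflow (D := K) (coboundary (D := KD) phi) v =
          \sum_(d | dvert d == v) (h (flip d) - h d).
  rewrite sum_pair_bool /net_inflow addrC; congr (_ + _).
  by rewrite -sumrN; apply: eq_bigr => e _; rewrite opprB.
rewrite sumrB; have -> : \sum_(d | dvert d == v) h d = \sum_(d | dvert d == v) h (sg d).
  by rewrite (reindex_inj (@perm_inj _ sg)) /=; apply: eq_bigl => d; rewrite dvert_sigma.
rewrite -sumrB.
have h0 d : sg d != ds -> sg d != dt -> h (flip d) - h (sg d) = 0.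
  by move=> sd_neq_ds sd_neq_dt; rewrite /h facet_sigma_flip ?subrr.
have [_ vs] := dart_s_spec; have [_ vt] := dart_t_spec.
have s_neq_t := source_neq_sink bipK.
have sg_neq d d' : dvert d != dvert d' -> sg d != d'.
  by apply: contra => /eqP <-; rewrite dvert_sigma.
have corner u d0 : dvert d0 = u -> \sum_(d | dvert d == u) (h (flip d) - h (sg d)) =
    h (flip ((sg^-1)%g d0)) - h d0 +
    \sum_(d | (dvert d == u) && (sg d != d0)) (h (flip d) - h (sg d)).
  move=> vd0; rewrite (bigD1 ((sg^-1)%g d0)) ?permKV //=; last by rewrite -dvert_sigma permKV vd0.
  by congr (_ + _); apply: eq_bigl => d; congr (_ && _); rewrite (can2_eq (permK sg) (permKV sg)).
rewrite /Tr; have [-> | v_neq_s] := eqVneq v s.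
  rewrite (corner s ds vs) big1 ?addr0 => [|d /andP[/eqP vd sd_neq]]; last first.
    by apply: h0 => //; apply: sg_neq; rewrite vd vt.
  rewrite /h (@facet_of_eq (flip _) dt) ?opprB //.
  by rewrite raw_facet_dart_t raw_facet_fphi_dart_s // fphiE flipK permKV.
have [-> | v_neq_t] := eqVneq v t.
  rewrite (corner t dt vt) big1 ?addr0 => [|d /andP[/eqP vd sd_neq]]; last first.
    by apply: h0 => //; apply: sg_neq; rewrite vd vs eq_sym.
  rewrite /h (@facet_of_eq (flip _) ds) //.
  by rewrite raw_facet_dart_s raw_facet_fphi_dart_t // fphiE flipK permKV.
by rewrite big1 // => d /eqP vd; apply: h0; apply: sg_neq; rewrite vd ?vs ?vt.
Qed.

Lemma sum_outer_arc (A : zmodType) (F : gE K * bool -> A) m n : (m <= n <= ord)%N ->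
  \sum_(d | out d && (m <= idx d < n)%N) F d = \sum_(m <= i < n) F (iter i fp ds).
Proof.
move=> /andP[le_mn le_n].
have iter_inj : {in index_iota m n &, injective (fun i => iter i fp ds)}.
  move=> i j; rewrite !mem_index_iota => /andP[_ lt_i] /andP[_ lt_j] eq_ij.
  by rewrite -(findex_iter (leq_trans lt_i le_n)) eq_ij findex_iter // (leq_trans lt_j le_n).
rewrite -(big_map (fun i => iter i fp ds) xpredT) big_uniq; last first.
  by rewrite map_inj_in_uniq // iota_uniq.
apply: eq_bigl => d; apply/idP/mapP => [/andP[out_d idx_d] | [i]].
  by exists (idx d); rewrite ?mem_index_iota ?iter_findex_outer.
rewrite mem_index_iota => /andP[le_i lt_i] ->.
by rewrite outer_iter findex_iter ?le_i ?lt_i // (leq_trans lt_i le_n).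
Qed.

(* Along a facet the darts telescope; the two outer facets collect the boundary walks
   from s to t and from t to s. *)
Lemma dual_net_inflow_coboundary (A : zmodType) (pi : gV K -> A) f :
  net_inflow (D := KD) (coboundary (D := K) pi) f = Tr (G := KD) sD tD (pi t - pi s) f.
Proof.
pose g d := pi (dvert d).
have -> : net_inflow (D := KD) (coboundary (D := K) pi) f =
          \sum_(d | fo d == f) (g (fp d) - g d).
  rewrite sum_pair_bool /net_inflow /=; congr (_ + _).
    by apply: eq_bigr => e _; rewrite /g dvert_fphi.
  by rewrite -sumrN; apply: eq_bigr => e _; rewrite /g dvert_fphi opprB.
have [out_ds vs] := dart_s_spec; have [out_dt vt] := dart_t_spec.
have arc m n : (m <= n <= ord)%N ->
    \sum_(d | out d && (m <= idx d < n)%N) (g (fp d) - g d) = g (iter n fp ds) - g (iter m fp ds).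
  move=> le_mn; rewrite sum_outer_arc //; under eq_bigr do rewrite -iterS.
  by rewrite (telescope_sumr (fun i => g (iter i fp ds))); case/andP: le_mn.
have lt_dt := findex_dart_t_lt.
rewrite /Tr; have [-> | f_neq_sD] := eqVneq f sD.
  rewrite (eq_bigl (fun d => out d && (idx dt <= idx d < ord)%N)); last first.
    move=> d; rewrite /dual_source -val_eqE /= raw_facet_dart_t raw_facet_eq_inr.
    by case out_d: (out d); rewrite //= findex_outer_lt // andbT [RHS]leqNgt; case: (_ < _)%N.
  rewrite arc ?(ltnW lt_dt) ?leqnn // iter_order ?iter_findex_outer //; last exact: fphi_inj.
  by rewrite /g vs vt opprB.
have [-> | f_neq_tD] := eqVneq f tD.
  rewrite (eq_bigl (fun d => out d && (0 <= idx d < idx dt)%N)); last first.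
    move=> d; rewrite /dual_sink -val_eqE /= raw_facet_dart_s raw_facet_eq_inr.
    by case: (out d) => //=; case: (idx d < idx dt)%N.
  by rewrite arc ?(ltnW lt_dt) // iter_findex_outer // /g vt vs.
rewrite sumrB [X in _ - X](reindex_inj fphi_inj) /=; apply/eqP; rewrite subr_eq0; apply/eqP.
apply: eq_bigl => d.
have [fd_ds | fd_neq_ds] := eqVneq (fp d) ds.
  rewrite fd_ds (@facet_of_eq d dt) ?raw_facet_dart_t ?raw_facet_fphi_dart_s //.
  by rewrite eq_sym (negbTE f_neq_sD) eq_sym (negbTE f_neq_tD).
have [fd_dt | fd_neq_dt] := eqVneq (fp d) dt.
  rewrite fd_dt (@facet_of_eq d ds) ?raw_facet_dart_s ?raw_facet_fphi_dart_t //.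
  by rewrite eq_sym (negbTE f_neq_tD) eq_sym (negbTE f_neq_sD).
by rewrite (@facet_of_eq (fp d) d) // raw_facet_fphi.
Qed.

Section DualEdgeInvariant.
Variables (T : Type) (u : gV KD -> T).
Hypothesis u_edge : forall e : gE KD, u (ghd e) = u (gtl e).

Lemma dual_edge_invariant_flip d : u (fo (flip d)) = u (fo d).
Proof. by case: d => e [] /=; rewrite (u_edge e). Qed.

(* Turning around a vertex, consecutive darts lie on a common facet except when
   entering the corner of the outer face, so we start the turn at that corner. *)
Lemma dual_edge_invariant_vertex d d' : dvert d = dvert d' -> u (fo d) = u (fo d').
Proof.
move=> vd_vd'; have [_ vs] := dart_s_spec; have [_ vt] := dart_t_spec.
have s_neq_t := source_neq_sink bipK.
have [b [vb b_corner]] : exists b, dvert b = dvert d /\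
    forall y, dvert y = dvert d -> y != b -> (y != ds) && (y != dt).
  have [vd_s | vd_neq_s] := eqVneq (dvert d) s.
    exists ds; split=> [|y vy y_neq]; first by rewrite vs.
    rewrite y_neq; apply/eqP=> y_dt.
    by move: s_neq_t; rewrite -vd_s -vy y_dt vt eqxx.
  have [vd_t | vd_neq_t] := eqVneq (dvert d) t.
    exists dt; split=> [|y vy y_neq]; first by rewrite vt.
    rewrite y_neq andbT; apply/eqP=> y_ds.
    by move: vd_neq_s; rewrite -vy y_ds vs eqxx.
  exists d; split=> // y vy _; apply/andP; split.
    by apply/eqP=> y_ds; move: vd_neq_s; rewrite -vy y_ds vs eqxx.
  by apply/eqP=> y_dt; move: vd_neq_t; rewrite -vy y_dt vt eqxx.
have vert_iter i : dvert (iter i sg b) = dvert d.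
  by elim: i => //= i IH; rewrite dvert_sigma.
have turn i : (i < order sg b)%N -> u (fo (iter i sg b)) = u (fo b).
  elim: i => [//|i IH] lt_i; rewrite -IH ?(ltnW lt_i) // iterS.
  have /andP[neq_ds neq_dt] : (sg (iter i sg b) != ds) && (sg (iter i sg b) != dt).
    apply: b_corner; first by rewrite -iterS vert_iter.
    by apply/eqP=> eq_b; have := findex_iter lt_i; rewrite iterS eq_b findex0.
  by rewrite facet_sigma_flip // dual_edge_invariant_flip.
have at_b y : fconnect sg b y -> u (fo y) = u (fo b).
  by move=> b_y; rewrite -(iter_findex b_y) turn // findex_max.
by rewrite (at_b d) ?(at_b d') //; apply: sigma_connect; rewrite vb.
Qed.

Lemma dual_edge_invariant_const f f' : u f = u f'.
Proof.
have [_ vs] := dart_s_spec.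
suff u_ds d : u (fo d) = u (fo ds).
  by have [d ->] := facet_of_surj f; have [d' ->] := facet_of_surj f'; rewrite !u_ds.
have [p wp ep] := walk_from_source bipK (dvert d).
suff at_end v q : (forall d', dvert d' = v -> u (fo d') = u (fo ds)) -> walk_from v q ->
    forall d', dvert d' = walk_end v q -> u (fo d') = u (fo ds).
  apply: (at_end s p _ wp); last by rewrite ep.
  by move=> d' vd'; apply: dual_edge_invariant_vertex; rewrite vd' vs.
elim: q v => [|e q IH] v at_v //= /andP[/eqP tl_e wq].
apply: IH wq => d' vd'; rewrite -(at_v (e, true)) // (u_edge e).
exact: dual_edge_invariant_vertex.
Qed.
End DualEdgeInvariant.

Lemma card_dual_vertices : #|gV KD| = (#|froots fp| + 1)%N.
Proof.
rewrite card_sig -[LHS]sum1_card big_mkcond big_sumType /= big_bool /=.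
have -> : inr true \in [pred r | is_facet sg dout s t r].
  by rewrite inE; apply/existsP; exists ds; rewrite raw_facet_dart_s.
have -> : inr false \in [pred r | is_facet sg dout s t r].
  by rewrite inE; apply/existsP; exists dt; rewrite raw_facet_dart_t.
have inner_facet r : (inl r \in [pred r | is_facet sg dout s t r]) = froots fp r && ~~ out r.
  rewrite inE; apply/existsP/andP => [[d /eqP] | [root_r not_out_r]].
    rewrite raw_facetE; case: ifP => // out_d [<-]; split.
      exact: (roots_root fphi_connect_sym).
    apply: contraFN out_d; rewrite !outerE => /connect_trans; apply.
    by rewrite fphi_connect_sym connect_root.
  by exists r; rewrite raw_facetE (negbTE not_out_r) (eqP root_r).
under eq_bigr do rewrite inner_facet.
rewrite -big_mkcond /= -[in RHS]sum1_card [in RHS](bigID (fun r => out r)) /=.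
have -> : (\sum_(r in froots fp | out r) 1)%N = 1%N.
  rewrite (eq_bigl (fun r => r == froot fp ds)) ?big_pred1_eq // => r.
  rewrite inE; apply/andP/eqP => [[root_r out_r] | ->].
    by rewrite -(eqP root_r); apply/esym/(fingraph.rootP fphi_connect_sym); rewrite -outerE.
  by split; [exact: (roots_root fphi_connect_sym) | rewrite outerE connect_root].
by rewrite addnC addnAC.
Qed.

(* Euler's formula makes the dimension count exact: the coboundaries of the dual,
   a space of dimension #F - 1, exhaust the flows, a space of dimension E - V + 2. *)
Lemma flow_dual_coboundary (x : gE K -> rat) :
  (forall v, v != s -> v != t -> net_inflow x v = 0) ->
  exists phi : gV KD -> rat, x =1 coboundary (D := KD) phi.
Proof.
move=> flow_x; pose Dm := incidence KD; pose Bp := inner_incidence s t.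
have DmBp : Dm *m Bp = 0.
  apply/matrixP => i k; rewrite [RHS]mxE.
  transitivity ((row i Dm *m Bp) 0 k); first by rewrite -row_mul [RHS]mxE.
  rewrite (_ : row i Dm = \row_j coboundary (D := KD) (fun f => (f == enum_val i)%:R) (enum_val j)).
    rewrite row_mul_inner_incidence net_inflow_dual_coboundary /Tr.
    by case: (enum_val k == s); case: (enum_val k == t); rewrite /= ?mulr0 ?mul0r.
  by apply/rowP => j; rewrite !mxE.
have rank_Dm := rank_incidence (@dual_edge_invariant_const rat).
have rank_Bp := rank_inner_incidence bipK.
have ker_Bp : (kermx Bp <= Dm)%MS.
  have Dm_ker : (Dm <= kermx Bp)%MS by rewrite sub_kermx DmBp.
  rewrite -(mxrank_leqif_sup Dm_ker).2 eqn_leq (mxrankS Dm_ker) /= mxrank_ker.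
  have euler : (#|gV K| + #|froots fp| = #|gE K| + 2)%N by case: planeK.
  move: euler card_dual_vertices rank_Dm rank_Bp; rewrite -/Dm -/Bp.
  move: (#|gV K|) (#|gE K|) (#|gV KD|) (#|froots fp|) (\rank Dm) (\rank Bp).
  by clear; lia.
have x_ker : ((\row_j x (enum_val j)) <= kermx Bp)%MS.
  rewrite sub_kermx; apply/eqP/rowP => k; rewrite row_mul_inner_incidence [RHS]mxE.
  have [/andP[k_neq_s k_neq_t] | _] := boolP (_ && _); last by rewrite mulr0.
  by rewrite flow_x ?mul0r.
have /submxP[Y YE] := submx_trans x_ker ker_Bp.
exists (fun f => Y 0 (enum_rank f)) => e.
have := row_mul_incidence (fun f => Y 0 (enum_rank f)) (enum_rank e); rewrite enum_rankK => <-.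
have -> : \row_i Y 0 (enum_rank (enum_val i : gV KD)) = Y by apply/rowP => i; rewrite mxE enum_valK.
by rewrite -YE mxE enum_rankK.
Qed.

Lemma maxpath_dual_coboundary X : maxpath s X ->
  exists2 phi : gV KD -> rat,
    (fun e => (e \in X)%:R) =1 coboundary (D := KD) phi & phi tD - phi sD = 1.
Proof.
rewrite (maxpathE bipK) eqxx /= => /andP[wX /eqP eX].
have uX := walk_uniq_edges (bipolar_acyclic bipK) wX.
have inflow_X v : net_inflow (fun e => (e \in X)%:R : rat) v = (t == v)%:R - (s == v)%:R.
  by rewrite (net_inflow_walk_indicator _ _ wX uX) eX.
have [phi X_phi] : exists phi : gV KD -> rat, (fun e => (e \in X)%:R) =1 coboundary phi.
  apply: flow_dual_coboundary => v v_neq_s v_neq_t.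
  by rewrite inflow_X eq_sym (negbTE v_neq_t) eq_sym (negbTE v_neq_s) subrr.
exists phi => //; have := net_inflow_dual_coboundary phi t.
rewrite -(eq_net_inflow X_phi) inflow_X /Tr (eq_sym t s) (negbTE (source_neq_sink bipK)) eqxx.
by rewrite subr0 => <-.
Qed.

Lemma dual_acyclic : acyclic KD.
Proof.
move=> f [//|e p] wp ep.
have [X mX e_X] := maxpath_through bipK e.
have [phi X_phi _] := maxpath_dual_coboundary mX.
have := walk_sum_coboundary phi wp; rewrite ep subrr -(eq_bigr _ (fun e _ => X_phi e)).
by rewrite sum_indicator_count /= e_X => /eqP; rewrite Num.Theory.pnatr_eq0.
Qed.

Lemma facet_of_inner_orbit d d' : ~~ out d -> fconnect fp d d' -> fo d' = fo d.
Proof.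
move=> not_out_d d_d'; apply: facet_of_eq; rewrite !raw_facetE.
have -> : out d' = out d by rewrite !outerE (same_connect_r fphi_connect_sym d_d').
rewrite (negbTE not_out_d); congr inl; apply/esym/(fingraph.rootP fphi_connect_sym)/d_d'.
Qed.

(* An inner facet has no source: along its boundary, the dart at the lowest vertex
   (for the height order of K) is followed by a dart on an edge leaving that vertex. *)
Lemma dual_no_in_edge f : ~~ [exists e, @ghd KD e == f] -> f = sD.
Proof.
have [d0 ->] := facet_of_surj f; move=> no_in.
have head_dart d : fo d = fo d0 -> d.2 = false.
  by case: d => e [] //= e_d0; case/existsP: no_in; exists e; rewrite /= e_d0.
have [out_d0 | inner_d0] := boolP (out d0).
  have [lt_d0 | ge_d0] := boolP (idx d0 < idx dt)%N.
    have [_ vs] := dart_s_spec; have := head_dart ds.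
    rewrite (@facet_of_eq ds d0) ?raw_facet_dart_s ?raw_facetE ?out_d0 ?lt_d0 // => /(_ erefl).
    case: ds vs => e [] //= hd_e _; move: (head_neq_source bipK e).
    by rewrite -[ghd e]/(dvert (e, false)) hd_e eqxx.
  by apply: facet_of_eq; rewrite raw_facet_dart_t raw_facetE out_d0 (negbTE ge_d0).
have [x d0_x x_min] := arg_minnP (fun x => height (dvert x)) (connect0 _ d0 : fconnect fp d0 d0).
have := x_min _ (connect_trans d0_x (fconnect1 _ _)); rewrite dvert_fphi.
have := head_dart x (facet_of_inner_orbit inner_d0 d0_x).
by case: x {d0_x x_min} => e [] //= _; rewrite leqNgt (height_lt (bipolar_acyclic bipK)).
Qed.

Lemma dual_no_out_edge f : ~~ [exists e, @gtl KD e == f] -> f = tD.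
Proof.
have [d0 ->] := facet_of_surj f; move=> no_out.
have tail_dart d : fo d = fo d0 -> d.2 = true.
  by case: d => e [] //= e_d0; case/existsP: no_out; exists e; rewrite /= e_d0.
have [out_d0 | inner_d0] := boolP (out d0).
  have [lt_d0 | ge_d0] := boolP (idx d0 < idx dt)%N.
    by apply: facet_of_eq; rewrite raw_facet_dart_s raw_facetE out_d0 lt_d0.
  have [_ vt] := dart_t_spec; have := tail_dart dt.
  rewrite (@facet_of_eq dt d0) ?raw_facet_dart_t ?raw_facetE ?out_d0 ?(negbTE ge_d0) //.
  move=> /(_ erefl).
  case: dt vt => e [] //= tl_e _; move: (tail_neq_sink bipK e).
  by rewrite -[gtl e]/(dvert (e, true)) tl_e eqxx.
have [x d0_x x_max] := arg_maxnP (fun x => height (dvert x)) (connect0 _ d0 : fconnect fp d0 d0).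
have := x_max _ (connect_trans d0_x (fconnect1 _ _)); rewrite dvert_fphi.
have := tail_dart x (facet_of_inner_orbit inner_d0 d0_x).
by case: x {d0_x x_max} => e [] //= _; rewrite leqNgt (height_lt (bipolar_acyclic bipK)).
Qed.

Lemma dual_bipolar : bipolar (G := KD) sD tD.
Proof.
split; first exact: dual_acyclic.
- rewrite card_dual_vertices addn1 ltnS lt0n; apply/eqP => /card0_eq /(_ (froot fp ds)).
  by rewrite inE (roots_root fphi_connect_sym).
- move=> f; apply/idP/eqP => [/dual_no_in_edge // | ->].
  by have [f0 no_in] := exists_source dual_acyclic sD; rewrite -(dual_no_in_edge no_in).
- move=> f; apply/idP/eqP => [/dual_no_out_edge // | ->].
  by have [f0 no_out] := exists_sink dual_acyclic sD; rewrite -(dual_no_out_edge no_out).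
Qed.

Lemma maxpaths_cross_once (v : gV K) X f Y : maxpath v X -> maxpath (G := KD) f Y ->
  \sum_(e in Y) ((e \in X)%:R : int) = 1.
Proof.
move=> mX mY; have mX_s : maxpath s X by rewrite -(maxpath_source bipK mX).
have [phi X_phi phi_st] := maxpath_dual_coboundary mX_s.
move: mY; rewrite (maxpathE dual_bipolar) => /and3P[/eqP -> wY /eqP eY].
have := walk_sum_coboundary phi wY; rewrite eY phi_st -(eq_bigr _ (fun e _ => X_phi e)).
rewrite -big_uniq ?(walk_uniq_edges dual_acyclic wY) // !sum_indicator_count.
by move=> /eqP; rewrite Num.Theory.pnatr_eq1 => /eqP ->.
Qed.

Lemma flow_iff_dual_path_sums (A : zmodType) (x : gE K -> A) (b : A) :
  (forall v, net_inflow x v = Tr s t b v) <->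
  (forall f Y, maxpath (G := KD) f Y -> \sum_(e : gE K | e \in Y) x e = b).
Proof.
split=> [flow_x f Y mY | sums_x v].
  apply: (flow_sum_cut bipK) flow_x => X mX.
  by rewrite sum_mem_indicatorC (maxpaths_cross_once mX mY).
have [phi x_phi phi_st] := path_sums_coboundary dual_bipolar sums_x.
by rewrite (eq_net_inflow (D := K) x_phi) net_inflow_dual_coboundary phi_st.
Qed.

Lemma dual_flow_iff_path_sums (A : zmodType) (x : gE K -> A) (b : A) :
  (forall f, net_inflow (D := KD) x f = Tr sD tD b f) <->
  (forall v X, maxpath v X -> \sum_(e in X) x e = b).
Proof.
split=> [flow_x v X mX | sums_x f].
  by apply: (flow_sum_cut dual_bipolar) flow_x => Y mY; apply: maxpaths_cross_once mX mY.
have [pi x_pi pi_st] := path_sums_coboundary bipK sums_x.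
by rewrite (eq_net_inflow (D := KD) x_pi) dual_net_inflow_coboundary pi_st.
Qed.
End Plane.

Definition edge_weight (A : zmodType) (D : digraph) (n : nat) (h' : gE D -> 'I_n)
    (a : 'I_n -> A) (P : pred 'I_n) (e : gE D) : A :=
  if P (h' e) then a (h' e) else 0.

Section Reindex.
Variables (A : zmodType) (D : digraph) (n : nat) (h : 'I_n -> gE D) (h' : gE D -> 'I_n).
Hypotheses (hK : cancel h h') (h'K : cancel h' h).

Lemma sum_edge_weight (a : 'I_n -> A) (P : pred 'I_n) (Q : pred (gE D)) :
  \sum_(e | Q e) edge_weight h' a P e = \sum_(i | P i && Q (h i)) a i.
Proof.
rewrite (reindex h) /=; last by apply: onW_bij; exists h'.
rewrite [RHS](eq_bigl (fun i => Q (h i) && P i)); last by move=> i; rewrite andbC.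
by rewrite big_mkcondr; apply: eq_bigr => i _; rewrite /edge_weight hK.
Qed.

Lemma Eff_edge_weight (a : 'I_n -> A) (P : pred 'I_n) v :
  Eff h a P v = net_inflow (edge_weight h' a P) v.
Proof.
by rewrite /Eff /net_inflow !sum_edge_weight; congr (_ - _); apply: eq_bigl => i; rewrite andbC.
Qed.

Lemma solutionE (H : digraph) (s t : gV D) (psi : 'I_n -> gE H) (b : A) (a : 'I_n -> A) :
  solution s t h psi b a <->
  (forall v X, maxpath v X -> forall w,
     net_inflow (edge_weight h' a (fun i => psi i \in X)) w = Tr s t b w).
Proof.
by split=> sol v X mX w; have := sol v X mX w; rewrite Eff_edge_weight.
Qed.
End Reindex.

Lemma solution_iff_cross_sums (A : zmodType) (G H : digraph) (sG tG : gV G)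
    (sig : {perm gE G * bool}) (o : gE G * bool) (n : nat)
    (phi : 'I_n -> gE G) (psi : 'I_n -> gE H) (b : A) (a : 'I_n -> A) :
  bipolar sG tG -> upward_plane sig o sG tG -> bijective phi ->
  solution sG tG phi psi b a <->
  (forall v X, maxpath (G := H) v X -> forall f Y, maxpath (G := dual sig o sG tG) f Y ->
     \sum_(i | (psi i \in X) && (phi i \in Y)) a i = b).
Proof.
move=> bipG planeG [phi' phiK phi'K]; rewrite (solutionE phiK phi'K).
split=> sums v X mX.
  move=> f Y mY; have flow := sums v X mX.
  have := (flow_iff_dual_path_sums bipG planeG _ _).1 flow f Y mY.
  by rewrite (sum_edge_weight phiK phi'K).
apply/(flow_iff_dual_path_sums bipG planeG) => f Y mY.
by rewrite (sum_edge_weight phiK phi'K); apply: sums mX f Y mY.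
Qed.

Lemma dual_solution_iff_cross_sums (A : zmodType) (G H : digraph) (sH tH : gV H)
    (sig : {perm gE H * bool}) (o : gE H * bool) (n : nat)
    (phi : 'I_n -> gE G) (psi : 'I_n -> gE H) (b : A) (a : 'I_n -> A) :
  bipolar sH tH -> upward_plane sig o sH tH -> bijective psi ->
  solution (dual_source sig o sH tH) (dual_sink sig o sH tH) psi phi b a <->
  (forall v X, maxpath (G := H) v X -> forall f Y, maxpath (G := G) f Y ->
     \sum_(i | (psi i \in X) && (phi i \in Y)) a i = b).
Proof.
move=> bipH planeH [psi' psiK psi'K]; rewrite (solutionE (D := dual sig o sH tH) psiK psi'K).
split=> sums.
  move=> v X mX f Y mY; have flow := sums f Y mY.
  have := (dual_flow_iff_path_sums bipH planeH _ _).1 flow v X mX.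
  rewrite (sum_edge_weight (D := dual sig o sH tH) psiK psi'K) => <-.
  by apply: eq_bigl => i; rewrite andbC.
move=> f Y mY; apply/(dual_flow_iff_path_sums bipH planeH) => v X mX.
rewrite (sum_edge_weight (D := dual sig o sH tH) psiK psi'K) -(sums v X mX f Y mY).
by apply: eq_bigl => i; rewrite andbC.
Qed.

Theorem theorem4p4 (A : zmodType) (G H : digraph)
    (sG tG : gV G) (sigG : {perm (gE G * bool)}) (oG : gE G * bool)
    (sH tH : gV H) (sigH : {perm (gE H * bool)}) (oH : gE H * bool)
    (n : nat) (phi : 'I_n -> gE G) (psi : 'I_n -> gE H) (b : A) (a : 'I_n -> A) :
  bipolar sG tG -> upward_plane sigG oG sG tG ->
  bipolar sH tH -> upward_plane sigH oH sH tH ->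
  bijective phi -> bijective psi ->
  (solution sG tG phi psi b a <->
   solution (dual_source sigH oH sH tH) (dual_sink sigH oH sH tH)
            (H := dual sigG oG sG tG) psi phi b a).
Proof.
move=> bipG planeG bipH planeH phi_bij psi_bij.
rewrite (solution_iff_cross_sums _ _ _ bipG planeG phi_bij).
by rewrite (dual_solution_iff_cross_sums _ _ _ bipH planeH psi_bij).
Qed.
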